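(* Let $n$ be a positive integer and $p,q$ primes such that $\binom{n}{k}$ is divisible by $p$ or $q$ for every integer $1\le k\le n-1$. Then for every integer $m\le n$, the multinomial coefficient $\binom{n}{k_1,\dots,k_m}=\frac{n!}{k_1!\cdots k_m!}$ is divisible by $p$ or $q$ whenever $k_1+\cdots+k_m=n$ with $1\le k_i\le n-1$ for all $i$. *)

From mathcomp Require Import all_boot.
Set Implicit Arguments. Unset Strict Implicit. Unset Printing Implicit Defensive.

(* Multinomial coefficient n! / (k_1! ... k_m!) for a composition k of n
   indexed by 'I_m (exact division when \sum k_i = n). *)
Definition multinomial (n m : nat) (k : 'I_m -> nat) : nat :=
  n`! %/ \prod_(i < m) (k i)`!.

From mathcomp Require Import all_boot.

(* Splitting off one part k_i of the composition factors the multinomial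
   coefficient as C(n, k_i) times the multinomial coefficient of the remaining
   parts, so it is a multiple of the binomial coefficient C(n, k_i), which p or
   q divides by hypothesis. *)

Lemma fact_mul_dvd_fact_add (a b : nat) : a`! * b`! %| (a + b)`!.
Proof. by rewrite -(bin_fact (leq_addr b a)) addKn dvdn_mull. Qed.

Lemma prod_fact_dvd_fact_sum (I : Type) (r : seq I) (P : pred I) (k : I -> nat) :
  \prod_(i <- r | P i) (k i)`! %| (\sum_(i <- r | P i) k i)`!.
Proof.
apply: (big_rec2 (fun x y => x %| y`!)) => // i x y _ dvd_xy.
exact: dvdn_trans (dvdn_mul (dvdnn _) dvd_xy) (fact_mul_dvd_fact_add _ _).
Qed.

Lemma binomial_dvdn_multinomial (m : nat) (k : 'I_m -> nat) (i : 'I_m) :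
  'C(\sum_(j < m) k j, k i) %| multinomial (\sum_(j < m) k j) k.
Proof.
have [M defM] : exists M, (\sum_(j | j != i) k j)`! = M * \prod_(j | j != i) (k j)`!.
  exact/dvdnP/prod_fact_dvd_fact_sum.
rewrite /multinomial (bigD1 i) //= [\prod_(j < m) _](bigD1 i) //=.
rewrite -(bin_fact (leq_addr _ (k i))) addKn defM.
set P := \prod_(j | j != i) _.
have -> : 'C(k i + \sum_(j | j != i) k j, k i) * ((k i)`! * (M * P))
          = 'C(k i + \sum_(j | j != i) k j, k i) * M * ((k i)`! * P).
  by rewrite -!mulnA [(k i)`! * _]mulnCA.
have P_gt0 : 0 < P by rewrite prodn_gt0 // => j; exact: fact_gt0.
by rewrite mulnK ?muln_gt0 ?fact_gt0 ?P_gt0 // dvdn_mulr.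
Qed.

Theorem mainTheorem17 (n p q : nat) (hn : 0 < n) (hp : prime p) (hq : prime q)
  (hbin : forall k, 1 <= k <= n - 1 -> (p %| 'C(n, k)) || (q %| 'C(n, k)))
  (m : nat) (hm : m <= n) (k : 'I_m -> nat)
  (hsum : \sum_(i < m) k i = n)
  (hk : forall i, 1 <= k i <= n - 1) :
  (p %| multinomial n k) || (q %| multinomial n k).
Proof.
case: m hm k hsum hk => [|m] _ k hsum hk.
  by rewrite big_ord0 in hsum; rewrite -hsum in hn.
have := binomial_dvdn_multinomial _ k ord0; rewrite hsum => dvd_binomial.
by case/orP: (hbin _ (hk ord0)) => /dvdn_trans/(_ dvd_binomial) ->; rewrite ?orbT.
Qed.
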